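(* Let $G_1$ and $G_2$ be vertex-disjoint graphs. Then $$\frac{\sigma_1(G_1\cup G_2)}{\sigma_0(G_1\cup G_2)}=\frac{\sigma_1(G_1)}{\sigma_0(G_1)}+\frac{\sigma_1(G_2)}{\sigma_0(G_2)}.$$ Moreover, for every graph $G$ with at least one vertex, no isolated vertex, and maximum degree at most $2$, $$\frac{\sigma_1(G)}{\sigma_0(G)}\ge\frac13,$$ with equality for $G=P_2$.
   Context: All graphs are finite and simple. $\sigma_0(G)$ is the number of independent vertex sets of $G$ (including the empty set) and $\sigma_1(G)$ is the number of vertex sets $S\subseteq V(G)$ whose induced subgraph has exactly one edge. $G_1\cup G_2$ is the disjoint union (vertex set $V(G_1)\cup V(G_2)$, edge set $E(G_1)\cup E(G_2)$). $P_2$ is the path on two vertices (a single edge). *)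

From mathcomp Require Import all_boot all_order all_algebra.
Set Implicit Arguments. Unset Strict Implicit. Unset Printing Implicit Defensive.

Section Graphs.
Variable T : finType.

Definition simple_graph (e : rel T) : Prop := symmetric e /\ irreflexive e.

Definition independent (e : rel T) (S : {set T}) : bool :=
  [forall x in S, forall y in S, ~~ e x y].

(* number of edges of the induced subgraph G[S] (edges as 2-element vertex sets) *)
Definition edges_in (e : rel T) (S : {set T}) : nat :=
  #|[set A : {set T} | (A \subset S) &&
      [exists x, exists y, (A == [set x; y]) && e x y]]|.

Definition sigma0 (e : rel T) : nat := #|[set S : {set T} | independent e S]|.
Definition sigma1 (e : rel T) : nat := #|[set S : {set T} | edges_in e S == 1%N]|.

Definition degree (e : rel T) (x : T) : nat := #|[set y | e x y]|.

End Graphs.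

Definition dunion (T1 T2 : finType) (e1 : rel T1) (e2 : rel T2) : rel (T1 + T2)%type :=
  fun u v => match u, v with
             | inl a, inl b => e1 a b
             | inr a, inr b => e2 a b
             | _, _ => false
             end.

Definition P2 : rel 'I_2 := fun x y => x != y.

Definition sigma_ratio (T : finType) (e : rel T) : rat :=
  ((sigma1 e)%:R / (sigma0 e)%:R)%R.

Arguments simple_graph {T}.
Arguments independent {T}.
Arguments edges_in {T}.
Arguments sigma0 {T}.
Arguments sigma1 {T}.
Arguments degree {T}.
Arguments dunion {T1 T2}.
Arguments sigma_ratio {T}.

From mathcomp Require Import all_boot all_order all_algebra.
From mathcomp Require Import zify ring lra.
Import Order.TTheory GRing.Theory Num.Theory.
Set Implicit Arguments. Unset Strict Implicit. Unset Printing Implicit Defensive.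

(* Independent sets and one-edge sets of a disjoint union are exactly the unions of a set
   on each side with, respectively, both parts independent, or one part inducing one edge and
   the other independent.  Hence sigma0 is multiplicative and sigma1 obeys the product rule,
   which is the additivity of sigma1 / sigma0.

   For the lower bound fix an edge xy and let W be the union of the neighbourhoods of x and
   y.  An independent set I splits into I :&: W and I :\: W, and adding x and y to the latter
   gives a set inducing exactly the edge xy.  So sigma0 <= k(xy) * g(xy), where k(xy) counts
   the independent subsets of W and g(xy) the one-edge sets through x and y.  When all
   degrees are 1 or 2, k(xy) <= (deg x + 1) (deg y + 1) - 1 <= 3 (deg x + deg y - 1) <= 3 m,
   m the number of edges.  Summing over the 2 m ordered edges, along which every one-edge set
   is counted twice, gives 2 m sigma0 <= 3 m * 2 sigma1. *)

Section SimpleGraph.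
Variables (T : finType) (e : rel T).
Hypotheses (e_sym : symmetric e) (e_irr : irreflexive e).

Definition edge_set (S : {set T}) : {set {set T}} :=
  [set A : {set T} | (A \subset S) &&
     [exists x, exists y, (A == [set x; y]) && e x y]].

Lemma edges_inE (S : {set T}) : edges_in e S = #|edge_set S|. Proof. by []. Qed.

Lemma edge_setP (S A : {set T}) :
  reflect (A \subset S /\ exists x y, A = [set x; y] /\ e x y) (A \in edge_set S).
Proof.
apply: (iffP idP).
  rewrite inE => /andP [AS /existsP [x /existsP [y /andP [/eqP Axy exy]]]].
  by split=> //; exists x, y.
move=> [AS [x [y [Axy exy]]]]; rewrite inE AS /=.
by apply/existsP; exists x; apply/existsP; exists y; rewrite Axy eqxx.
Qed.

Lemma set2_edge_set (S : {set T}) x y :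
  x \in S -> y \in S -> e x y -> [set x; y] \in edge_set S.
Proof.
move=> xS yS exy; apply/edge_setP; split; last by exists x, y.
by rewrite subUset !sub1set xS yS.
Qed.

Lemma independentP (S : {set T}) :
  reflect (forall x y, x \in S -> y \in S -> ~~ e x y) (independent e S).
Proof.
apply: (iffP forall_inP) => [H x y xS yS | H x xS].
  by move: (H x xS) => /forall_inP; apply.
by apply/forall_inP => y yS; apply: H.
Qed.

Lemma independentS (A B : {set T}) : A \subset B -> independent e B -> independent e A.
Proof.
move=> AB /independentP H; apply/independentP => x y xA yA.
by apply: H; apply: (subsetP AB).
Qed.

Lemma independent0 : independent e set0.
Proof. by apply/independentP => x y; rewrite inE. Qed.

Lemma independent1 x : independent e [set x].
Proof. by apply/independentP => a b /set1P -> /set1P ->; rewrite e_irr. Qed.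

Lemma edges_in_eq0 (S : {set T}) : (edges_in e S == 0) = independent e S.
Proof.
rewrite edges_inE cards_eq0; apply/eqP/independentP => [S0 x y xS yS | H].
  by apply/negP => exy; move: (set2_edge_set xS yS exy); rewrite S0 inE.
apply/eqP; rewrite -subset0; apply/subsetP => A /edge_setP [AS [x [y [Axy exy]]]].
move: AS; rewrite Axy subUset !sub1set => /andP [xS yS].
by move: (H x y xS yS); rewrite exy.
Qed.

Lemma edges_in1_set2 (S : {set T}) x y u v : edges_in e S = 1 ->
  x \in S -> y \in S -> e x y -> u \in S -> v \in S -> e u v ->
  [set x; y] = [set u; v].
Proof.
rewrite edges_inE => /eqP /cards1P [A0 SA0] xS yS exy uS vS euv.
move: (set2_edge_set xS yS exy) (set2_edge_set uS vS euv).
by rewrite SA0 => /set1P -> /set1P ->.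
Qed.

Definition indep_sets : {set {set T}} := [set S | independent e S].
Definition one_edge_sets : {set {set T}} := [set S | edges_in e S == 1].

Lemma sigma0_gt0 : 0 < sigma0 e.
Proof. by apply/card_gt0P; exists set0; rewrite inE independent0. Qed.

Definition nbhd x : {set T} := [set y | e x y].
Definition edge_nbhd x y : {set T} := nbhd x :|: nbhd y.
Definition star x y : {set T} := x |: (nbhd x :\ y).
Definition indep_within (A : {set T}) : {set {set T}} :=
  [set K in indep_sets | K \subset A].
Definition indep_avoiding (A : {set T}) : {set {set T}} :=
  [set J in indep_sets | [disjoint J & A]].
Definition one_edge_sets_at x y : {set {set T}} :=
  [set S in one_edge_sets | (x \in S) && (y \in S)].

Lemma sigma0_le_within_avoiding (A : {set T}) :
  sigma0 e <= #|indep_within A| * #|indep_avoiding A|.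
Proof.
pose parts (I : {set T}) := (I :&: A, I :\: A).
have parts_inj : injective parts.
  by move=> I1 I2 [H1 H2]; rewrite -(setID I1 A) -(setID I2 A) H1 H2.
rewrite /sigma0 -cardsX -(card_imset _ parts_inj); apply: subset_leq_card.
apply/subsetP => _ /imsetP [I /[!inE] indI ->].
rewrite /= subsetIr (independentS (subsetIl _ _) indI) (independentS (subsetDl _ _) indI).
by have /subsetDP [] := subxx (I :\: A).
Qed.

Lemma edge_set_setU_edge x y (J : {set T}) : e x y -> independent e J ->
  [disjoint J & edge_nbhd x y] -> edge_set (J :|: [set x; y]) = [set [set x; y]].
Proof.
move=> exy /independentP indJ disJ.
have endpoint u v : u \in J :|: [set x; y] -> v \in J :|: [set x; y] -> e u v ->
    u \in [set x; y].
  rewrite in_setU => /orP [uJ|//] /[1!in_setU] /orP [vJ|vxy] euv.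
    by move: (indJ u v uJ vJ); rewrite euv.
  have : u \in edge_nbhd x y.
    by case/set2P: vxy euv => <-; rewrite !inE e_sym => ->; rewrite ?orbT.
  by rewrite (disjointFr disJ uJ).
apply/setP => A; rewrite in_set1; apply/edge_setP/eqP => [[AS [u [v [Auv euv]]]]|->].
  move: AS; rewrite Auv subUset !sub1set => /andP [uS vS].
  apply/eqP; rewrite eqEcard subUset !sub1set (endpoint u v) // (endpoint v u) //=;
    last by rewrite e_sym.
  have uv : u != v by apply: contraTneq euv => ->; rewrite e_irr.
  by rewrite !cards2 uv ltnS leq_b1.
split; first exact: subsetUr.
by exists x, y.
Qed.

Lemma card_indep_avoiding_edge_nbhd_le x y : e x y ->
  #|indep_avoiding (edge_nbhd x y)| <= #|one_edge_sets_at x y|.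
Proof.
move=> exy.
have xy_nbhd : [set x; y] \subset edge_nbhd x y.
  by rewrite subUset !sub1set !inE exy e_sym exy orbT.
have disj_xy J : J \in indep_avoiding (edge_nbhd x y) -> [disjoint J & [set x; y]].
  by rewrite inE => /andP [_ disJ]; exact: disjointWr xy_nbhd disJ.
pose add_xy (J : {set T}) := J :|: [set x; y].
have add_inj : {in indep_avoiding (edge_nbhd x y) &, injective add_xy}.
  move=> J1 J2 /disj_xy/setDidPl J1E /disj_xy/setDidPl J2E J12.
  have := congr1 (fun S : {set T} => S :\: [set x; y]) J12.
  by rewrite /add_xy !(setDUl _ [set x; y]) setDv !setU0 J1E J2E.
rewrite -(card_in_imset add_inj); apply: subset_leq_card.
apply/subsetP => _ /imsetP [J /[!inE] /andP [indJ disJ] ->].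
rewrite edges_inE (edge_set_setU_edge exy indJ disJ) cards1 eqxx /=.
by rewrite !inE !eqxx !orbT.
Qed.

Lemma card_indep_within_star x y : e x y ->
  #|indep_within (star x y)| <= 2 ^ (degree e x).-1 + 1.
Proof.
move=> exy.
have card_rest : #|nbhd x :\ y| = (degree e x).-1.
  by rewrite /degree -/(nbhd x) (cardsD1 y (nbhd x)) inE exy.
have sub : indep_within (star x y) \subset [set x] |: powerset (nbhd x :\ y).
  apply/subsetP => K /[!inE] /andP [/independentP indK Ksub].
  case: (boolP (x \in K)) => xK; [apply/orP; left | apply/orP; right].
    rewrite eqEsubset sub1set xK andbT; apply/subsetP => z zK; apply/set1P.
    move/subsetP/(_ z zK): Ksub; rewrite !inE => /predU1P [//|/andP [_ exz]].
    by move: (indK x z xK zK); rewrite exz.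
  apply/subsetP => z zK; move/subsetP/(_ z zK): Ksub; rewrite in_setU1.
  by case/predU1P => // zx; rewrite -zx zK in xK.
rewrite (leq_trans (subset_leq_card sub)) // cardsU1 card_powerset card_rest addnC.
by rewrite leq_add2l leq_b1.
Qed.

Lemma card_indep_within_edge_nbhd_lt x y : e x y ->
  #|indep_within (edge_nbhd x y)| < #|indep_within (star x y)| * #|indep_within (star y x)|.
Proof.
move=> exy.
set Px := star x y; set Py := star y x.
have nbhd_sub : edge_nbhd x y \subset Px :|: Py.
  apply/subsetP => z; rewrite !inE => /orP [exz|eyz].
    by case: (eqVneq z y) => _; rewrite exz ?orbT.
  by case: (eqVneq z x) => _; rewrite eyz ?orbT.
pose restr (K : {set T}) := (K :&: Px, K :&: Py).
have restr_inj : {in indep_within (edge_nbhd x y) &, injective restr}.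
  move=> K1 K2 /[!inE] /andP [_ K1W] /andP [_ K2W] [E1 E2].
  rewrite -(setIidPl (subset_trans K1W nbhd_sub)).
  by rewrite -(setIidPl (subset_trans K2W nbhd_sub)) setIUr E1 E2 -setIUr.
rewrite -cardsX -(card_in_imset restr_inj); apply: proper_card; apply/properP; split.
  apply/subsetP => _ /imsetP [K /[!inE] /andP [indK _] ->].
  by rewrite /= !(independentS (subsetIl _ _) indK) !subsetIr.
exists ([set x], [set y]); first by rewrite !inE !independent1 !sub1set !inE !eqxx.
apply/imsetP => -[K /[!inE] /andP [/independentP indK _] [Ex Ey]].
have /setIP [xK _] : x \in K :&: Px by rewrite -Ex set11.
have /setIP [yK _] : y \in K :&: Py by rewrite -Ey set11.
by move: (indK x y xK yK); rewrite exy.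
Qed.

Lemma sum_adj_degree (z : T) : \sum_v (e v z : nat) = degree e z.
Proof.
rewrite /degree -sum1_card [RHS]big_mkcond /=; apply: eq_bigr => v _.
by rewrite inE e_sym; case: (e z v).
Qed.

Lemma adj2_le_degree v x y : x != y -> (e v x : nat) + e v y <= degree e v.
Proof.
move=> xy; case evx: (e v x); case evy: (e v y) => //=.
- have : [set x; y] \subset nbhd v by rewrite subUset !sub1set !inE evx evy.
  by move/subset_leq_card; rewrite cards2 xy.
- by apply/card_gt0P; exists x; rewrite inE.
- by apply/card_gt0P; exists y; rewrite inE.
Qed.

Lemma degree_edge_le_sum x y : e x y ->
  2 * (degree e x + degree e y) <= \sum_v degree e v + 2.
Proof.
move=> exy.
have xy : x != y by apply: contraTneq exy => ->; rewrite e_irr.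
have dx : 0 < degree e x by apply/card_gt0P; exists y; rewrite inE.
have dy : 0 < degree e y by apply/card_gt0P; exists x; rewrite inE e_sym.
(* Summed over [v], the left-hand side is [2 * (deg x + deg y) - 2]. *)
have local v : (e v x : nat) + e v y + (v == x) * (degree e x).-1
                 + (v == y) * (degree e y).-1 <= degree e v.
  case: (eqVneq v x) => [->|vx]; first by rewrite e_irr exy (negbTE xy) /=; lia.
  case: (eqVneq v y) => [->|vy]; first by rewrite e_irr e_sym exy /=; lia.
  by rewrite !mul0n !addn0 adj2_le_degree.
have pick z c : \sum_v ((v == z) * c) = c.
  by rewrite (bigD1 z) //= eqxx mul1n big1 ?addn0 // => v /negbTE ->.
have := leq_sum (index_enum T) (fun v (_ : true) => local v).
by rewrite !big_split /= !sum_adj_degree !pick; lia.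
Qed.

Lemma card_indep_within_edge_nbhd_le_degree_sum x y : e x y ->
  0 < degree e x <= 2 -> 0 < degree e y <= 2 ->
  2 * #|indep_within (edge_nbhd x y)| <= 3 * \sum_v degree e v.
Proof.
move=> exy dx dy.
have small d : 0 < d <= 2 -> 2 ^ d.-1 + 1 <= d.+1 by case: d => [|[|[|]]].
have eyx : e y x by rewrite e_sym.
have := leq_trans (card_indep_within_star exy) (small _ dx).
have := leq_trans (card_indep_within_star eyx) (small _ dy).
move=> Ky Kx; have := leq_trans (card_indep_within_edge_nbhd_lt exy) (leq_mul Kx Ky).
have := degree_edge_le_sum exy.
have : degree e x = 1 \/ degree e x = 2 by lia.
have : degree e y = 1 \/ degree e y = 2 by lia.
by case=> ->; case=> ->; lia.
Qed.

Lemma sum_adj_pairs_one_edge_set_le2 S : S \in one_edge_sets ->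
  \sum_x \sum_y (e x y && (x \in S) && (y \in S) : nat) <= 2.
Proof.
rewrite inE => /eqP S1.
have /cards1P [A0 SA0] : #|edge_set S| == 1 by rewrite -edges_inE S1.
have /edge_setP [A0S [x0 [y0 [A0E e0]]]] : A0 \in edge_set S by rewrite SA0 set11.
move: A0S; rewrite A0E subUset !sub1set => /andP [x0S y0S].
rewrite pair_bigA /=.
apply: (@leq_trans (\sum_(p : T * T) ((p == (x0, y0)) + (p == (y0, x0))))).
  apply: leq_sum => -[x y] _ /=.
  case exy: (e x y); case xS: (x \in S); case yS: (y \in S) => //=.
  have E := edges_in1_set2 S1 xS yS exy x0S y0S e0.
  have /set2P hx : x \in [set x0; y0] by rewrite -E set21.
  have /set2P hy : y \in [set x0; y0] by rewrite -E set22.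
  have xy : x != y by apply: contraTneq exy => ->; rewrite e_irr.
  by case: hx hy xy => -> [] ->; rewrite ?eqxx // addnC.
have one p0 : \sum_(p : T * T) (p == p0 : nat) = 1.
  by rewrite (bigD1 p0) //= eqxx big1 // => p /negbTE ->.
by rewrite big_split /= !one.
Qed.

Lemma sum_card_one_edge_sets_at :
  \sum_x \sum_(y | e x y) #|one_edge_sets_at x y| <= 2 * sigma1 e.
Proof.
have card_at x y : #|one_edge_sets_at x y|
    = \sum_(S in one_edge_sets) ((x \in S) && (y \in S) : nat).
  rewrite -sum1_card big_mkcond [RHS]big_mkcond /=; apply: eq_bigr => S _.
  by rewrite !inE; case: (_ == 1); case: (x \in S); case: (y \in S).
have swap x : \sum_(y | e x y) #|one_edge_sets_at x y|
    = \sum_(S in one_edge_sets) \sum_y (e x y && (x \in S) && (y \in S) : nat).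
  rewrite -exchange_big big_mkcond /=; apply: eq_bigr => y _.
  by rewrite card_at; case: (e x y) => //=; rewrite big1.
rewrite (eq_bigr _ (fun x _ => swap x)) exchange_big /= mulnC -sum_nat_const.
exact: leq_sum (fun S => @sum_adj_pairs_one_edge_set_le2 S).
Qed.

Lemma sum_nbhd_const x c : \sum_(y | e x y) c = degree e x * c.
Proof. by rewrite /degree -sum_nat_const; apply: eq_bigl => y; rewrite inE. Qed.

Lemma sigma0_le_3sigma1 : 0 < #|T| ->
  (forall x, 0 < degree e x) -> (forall x, degree e x <= 2) -> sigma0 e <= 3 * sigma1 e.
Proof.
move=> T_gt0 deg_gt0 deg_le2.
set D := \sum_v degree e v.
have D_gt0 : 0 < D by case/card_gt0P: T_gt0 => x0 _; rewrite /D (bigD1 x0) // ltn_addr.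
have per_edge x y : e x y -> 2 * sigma0 e <= 3 * D * #|one_edge_sets_at x y|.
  move=> exy; set W := edge_nbhd x y.
  have split_bound : sigma0 e <= #|indep_within W| * #|one_edge_sets_at x y|.
    rewrite (leq_trans (sigma0_le_within_avoiding W)) //.
    by rewrite leq_mul2l card_indep_avoiding_edge_nbhd_le ?orbT.
  rewrite (leq_trans (leq_mul (leqnn 2) split_bound)) // mulnA leq_mul2r.
  by rewrite card_indep_within_edge_nbhd_le_degree_sum ?deg_gt0 ?deg_le2 ?orbT.
have sum_bound : D * (2 * sigma0 e) <= 3 * D * (2 * sigma1 e).
  rewrite {1}/D big_distrl /=.
  under eq_bigr => x _ do rewrite -sum_nbhd_const.
  apply: (@leq_trans (\sum_x \sum_(y | e x y) 3 * D * #|one_edge_sets_at x y|)).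
    by apply: leq_sum => x _; apply: leq_sum => y; apply: per_edge.
  under eq_bigr => x _ do rewrite -big_distrr.
  by rewrite -big_distrr /= leq_mul2l sum_card_one_edge_sets_at orbT.
nia.
Qed.

End SimpleGraph.

Section DisjointUnion.
Variables (T1 T2 : finType) (e1 : rel T1) (e2 : rel T2).

Definition dunion_set (p : {set T1} * {set T2}) : {set T1 + T2} :=
  inl @: p.1 :|: inr @: p.2.

Lemma mem_dunion_setl p z : (inl z \in dunion_set p) = (z \in p.1).
Proof.
rewrite in_setU mem_imset; last by move=> ? ? [].
by case: (z \in p.1) => //=; apply/imsetP => -[].
Qed.

Lemma mem_dunion_setr p z : (inr z \in dunion_set p) = (z \in p.2).
Proof.
rewrite in_setU [X in _ || X]mem_imset; last by move=> ? ? [].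
by case: (z \in p.2); rewrite ?orbT //= orbF; apply/imsetP => -[].
Qed.

Definition mem_dunion_set := (mem_dunion_setl, mem_dunion_setr).

Lemma dunion_set_inj : injective dunion_set.
Proof.
move=> [A1 B1] [A2 B2] E; congr pair; apply/setP => z.
  by rewrite -(mem_dunion_setl (A1, B1)) -(mem_dunion_setl (A2, B2)) E.
by rewrite -(mem_dunion_setr (A1, B1)) -(mem_dunion_setr (A2, B2)) E.
Qed.

Lemma dunion_setK (S : {set T1 + T2}) : dunion_set (inl @^-1: S, inr @^-1: S) = S.
Proof. by apply/setP => -[z|z]; rewrite mem_dunion_set inE. Qed.

Lemma card_dunion_sets (P : pred {set T1 + T2}) :
  #|[set S | P S]| = #|[set p | P (dunion_set p)]|.
Proof.
rewrite -(card_imset _ dunion_set_inj); apply: eq_card => S; rewrite inE.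
apply/idP/imsetP => [PS | [p /[!inE] Pp ->] //].
by exists (inl @^-1: S, inr @^-1: S); rewrite ?inE dunion_setK.
Qed.

Lemma independent_dunion p :
  independent (dunion e1 e2) (dunion_set p) = independent e1 p.1 && independent e2 p.2.
Proof.
apply/independentP/andP => [ind | [/independentP ind1 /independentP ind2]].
  by split; apply/independentP => x y xS yS;
    [apply: (ind (inl x) (inl y)) | apply: (ind (inr x) (inr y))];
    rewrite mem_dunion_set.
by move=> [x|x] [y|y]; rewrite !mem_dunion_set //=; [apply: ind1 | apply: ind2].
Qed.

Lemma edge_set_dunion p : edge_set (dunion e1 e2) (dunion_set p) =
  [set (inl @: C : {set T1 + T2}) | C : {set T1} in edge_set e1 p.1]
  :|: [set (inr @: C : {set T1 + T2}) | C : {set T2} in edge_set e2 p.2].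
Proof.
apply/setP => C; rewrite in_setU; apply/idP/idP.
  move=> /edge_setP [CS [u [v [Cuv euv]]]]; subst C; move: CS; rewrite subUset !sub1set.
  case: u euv => a; case: v => b //= eab /andP [];
    rewrite !mem_dunion_set => aS bS; apply/orP; [left | right];
    by apply/imsetP; exists [set a; b]; rewrite ?set2_edge_set // imsetU1 imset_set1.
case/orP => /imsetP [C' /edge_setP [C'S [a [b [C'ab eab]]]] ->]; subst C';
  move: C'S; rewrite imsetU1 imset_set1 => C'S; apply/edge_setP;
  rewrite !subUset !sub1set !mem_dunion_set -!sub1set -subUset C'S.
- by split=> //; exists (inl a), (inl b).
- by split=> //; exists (inr a), (inr b).
Qed.

Lemma edges_in_dunion p :
  edges_in (dunion e1 e2) (dunion_set p) = edges_in e1 p.1 + edges_in e2 p.2.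
Proof.
have inl_inj : injective (fun C : {set T1} => inl @: C : {set T1 + T2}).
  by apply: imset_inj => ? ? [].
have inr_inj : injective (fun C : {set T2} => inr @: C : {set T1 + T2}).
  by apply: imset_inj => ? ? [].
rewrite !edges_inE edge_set_dunion cardsU !card_imset // -[RHS]subn0; congr (_ - _).
apply/eqP; rewrite cards_eq0 -subset0; apply/subsetP => C /setIP [].
move=> /imsetP [C1 /edge_setP [_ [a [b [-> _]]]] ->] /imsetP [C2 _ E].
by have /imsetP [w _ /eqP] : inl a \in inr @: C2 by rewrite -E imset_f ?set21.
Qed.

Lemma sigma0_dunion : sigma0 (dunion e1 e2) = sigma0 e1 * sigma0 e2.
Proof.
rewrite /sigma0 card_dunion_sets -cardsX; apply: eq_card => p.
by rewrite !inE independent_dunion.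
Qed.

Lemma sigma1_dunion :
  sigma1 (dunion e1 e2) = sigma1 e1 * sigma0 e2 + sigma0 e1 * sigma1 e2.
Proof.
rewrite /sigma1 /sigma0 card_dunion_sets -!cardsX -cardsUI.
rewrite (_ : _ :&: _ = set0) ?cards0 ?addn0; last first.
  apply/setP => -[A B]; rewrite !inE /= -(edges_in_eq0 e1 A).
  by case: (edges_in e1 A) => [|[|]]; rewrite ?andbF.
by apply: eq_card => p; rewrite !inE edges_in_dunion addn_eq1 -!edges_in_eq0.
Qed.

End DisjointUnion.

Lemma ord2_eq_or (u v z : 'I_2) : u != v -> (z == u) || (z == v).
Proof. by case: u v z => [[|[|?]] ?] [[|[|?]] ?] [[|[|?]] ?]. Qed.

Lemma P2_independent (S : {set 'I_2}) : independent P2 S = (S != setT).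
Proof.
apply/independentP/idP => [ind | ST x y xS yS].
  by apply/eqP => ST; move: (ind ord0 ord_max); rewrite ST !inE => /(_ isT isT).
have /subsetPn [z _ zS] : ~~ ([set: 'I_2] \subset S) by rewrite eqEsubset subsetT in ST.
have xz : x != z by apply: contraNneq zS => <-.
have yz : y != z by apply: contraNneq zS => <-.
by move: (ord2_eq_or y xz); rewrite (negbTE yz) orbF eq_sym /P2 negbK.
Qed.

Lemma sigma0_P2 : sigma0 P2 = 3.
Proof.
rewrite /sigma0 (eq_card (B := [set~ setT])); last by move=> S; rewrite !inE P2_independent.
by rewrite cardsC1 -cardsT -powersetT card_powerset cardsT card_ord.
Qed.

Lemma sigma1_P2 : sigma1 P2 = 1.
Proof.
apply/eqP/cards1P; exists setT; apply/setP => S; rewrite !inE.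
case: (eqVneq S setT) => [->|ST]; last first.
  by move: (edges_in_eq0 P2 S); rewrite P2_independent ST => /eqP ->.
rewrite edges_inE; apply/cards1P; exists setT; apply/setP => C; rewrite in_set1.
apply/edge_setP/eqP => [[_ [u [v [-> uv]]]] | ->].
  by apply/setP => z; rewrite !inE ord2_eq_or.
split=> //; exists ord0, ord_max; split=> //.
by apply/setP => z; rewrite !inE ord2_eq_or.
Qed.

Local Open Scope ring_scope.

Theorem mainTheorem15 :
  (forall (T1 T2 : finType) (e1 : rel T1) (e2 : rel T2),
      simple_graph e1 -> simple_graph e2 ->
      sigma_ratio (dunion e1 e2) = sigma_ratio e1 + sigma_ratio e2) /\
  (forall (T : finType) (e : rel T),
      simple_graph e -> (0 < #|T|)%N ->
      (forall x, (0 < degree e x)%N) ->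
      (forall x, (degree e x <= 2)%N) ->
      1 / 3 <= sigma_ratio e) /\
  sigma_ratio P2 = 1 / 3.
Proof.
have sigma0_neq0 (T : finType) (e : rel T) : (sigma0 e)%:R != 0 :> rat.
  by rewrite pnatr_eq0 -lt0n sigma0_gt0.
split; [|split].
- move=> T1 T2 e1 e2 _ _.
  rewrite /sigma_ratio sigma0_dunion sigma1_dunion natrD !natrM.
  by field; rewrite !sigma0_neq0.
- move=> T e [e_sym e_irr] T_gt0 deg_gt0 deg_le2.
  have := sigma0_le_3sigma1 e_sym e_irr T_gt0 deg_gt0 deg_le2.
  rewrite -(ler_nat rat) natrM /sigma_ratio ler_pdivlMr ?ltr0n ?sigma0_gt0 //.
  lra.
- by rewrite /sigma_ratio sigma0_P2 sigma1_P2.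
Qed.
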